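(* Let $q$ be a prime power and let $\mathbf{G}\in\mathbb{F}_q^{k\times n}$ be a generator matrix of a linear $[n,k]_q$ code. Consider a coded storage system with files $f_1,\dots,f_k$ in which, for each $i\in[k]$, file $f_i$ has a given list $\mathcal{R}_i=(R_{i,1},\dots,R_{i,t_i})$ of $t_i\ge1$ recovery sets, each of size $1$ or $2$, and all servers have service rate $1$. Then: (i) if $\boldsymbol{x}^\star=(x^\star_{i,j}: i\in[k], j\in[t_i])$ is a maximum fractional matching in the graph representation of the code, the vector $\boldsymbol{\lambda}$ with $\lambda_i=\sum_{j=1}^{t_i}x^\star_{i,j}$ is a maximum demand vector in $\mathcal{S}(\mathbf{G})$; and (ii) for every maximum demand vector $\boldsymbol{\lambda}^\star\in\mathcal{S}(\mathbf{G})$ there exists a maximum fractional matching $\boldsymbol{x}^\star$ in the graph representation with $\lambda^\star_i=\sum_{j=1}^{t_i}x^\star_{i,j}$ for all $i\in[k]$.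
   Context: Let $\mathbf{g}_1,\dots,\mathbf{g}_n$ be the columns of $\mathbf{G}$ and $\mathbf{e}_i$ the $i$-th unit vector of $\mathbb{F}_q^k$. A set $R\subseteq[n]$ is a recovery set for file $f_i$ if there exist nonzero $\alpha_j\in\mathbb{F}_q$ ($j\in R$) with $\sum_{j\in R}\alpha_j\mathbf{g}_j=\mathbf{e}_i$. The service rate region $\mathcal{S}(\mathbf{G})$ is the set of $\boldsymbol{\lambda}\in\mathbb{R}^k$ for which there exist real $\lambda_{i,j}\ge0$ with $\sum_{j=1}^{t_i}\lambda_{i,j}=\lambda_i$ for all $i\in[k]$ and $\sum_{i=1}^k\sum_{j\in[t_i]:\,l\in R_{i,j}}\lambda_{i,j}\le1$ for every server $l\in[n]$. A maximum demand vector is a $\boldsymbol{\lambda}\in\mathcal{S}(\mathbf{G})$ maximizing $\sum_{i=1}^k\lambda_i$ over $\mathcal{S}(\mathbf{G})$. The graph representation is the (multi)graph with vertex set $[n]$ plus one new dummy vertex $d_{i,j}$ for each recovery set $R_{i,j}$ of size 1, and edges indexed by $(i,j)$: if $R_{i,j}=\{a,b\}$ the edge joins $a$ and $b$; if $R_{i,j}=\{r\}$ it joins $r$ and $d_{i,j}$. A fractional matching assigns $x_e\in[0,1]$ to edges so that at each vertex the sum over incident edges is at most 1; a maximum fractional matching maximizes $\sum_e x_e$. *)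

From HB Require Import structures.
From mathcomp Require Import all_boot all_order all_algebra.
Set Implicit Arguments. Unset Strict Implicit. Unset Printing Implicit Defensive.
Import Order.TTheory GRing.Theory Num.Theory.
Local Open Scope ring_scope.

Section Defs.
Variable F : fieldType.
Variables k n : nat.

Definition unit_vec (i : 'I_k) : 'cV[F]_k := \col_(r < k) (r == i)%:R.

Definition is_recovery_set (G : 'M[F]_(k, n)) (i : 'I_k) (R : {set 'I_n}) : Prop :=
  exists alpha : 'I_n -> F,
    (forall j, j \in R -> alpha j != 0) /\
    \sum_(j in R) alpha j *: col j G = unit_vec i.
End Defs.

Section Region.
Variables (k n : nat) (t : 'I_k -> nat).

Definition ridx := {i : 'I_k & 'I_(t i)}.

Definition rpair (i : 'I_k) (j : 'I_(t i)) : ridx := Tagged (fun i => 'I_(t i)) j.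

Variable Rs : ridx -> {set 'I_n}.
Variable R : realFieldType.

(* service rate region S(G) (all servers have service rate 1), w.r.t. the
   given recovery sets Rs (i,j) = R_{i,j} *)
Definition in_service_rate_region (lam : 'I_k -> R) : Prop :=
  exists lij : ridx -> R,
    (forall e, 0 <= lij e) /\
    (forall i, \sum_(j < t i) lij (rpair j) = lam i) /\
    (forall l : 'I_n, \sum_(e : ridx | l \in Rs e) lij e <= 1).

Definition max_demand_vector (lam : 'I_k -> R) : Prop :=
  in_service_rate_region lam /\
  forall lam', in_service_rate_region lam' -> \sum_i lam' i <= \sum_i lam i.

(* graph representation: vertices are the servers [n] plus one dummy vertex
   d_{i,j} for each recovery set R_{i,j} of size 1; edges are indexed by ridx *)
Definition gvertex := ('I_n + {e : ridx | #|Rs e| == 1%N})%type.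

(* incidence: edge (i,j) joins the elements of R_{i,j}, and when
   R_{i,j} = {r} it joins r to d_{i,j} *)
Definition gincident (v : gvertex) (e : ridx) : bool :=
  match v with
  | inl l => l \in Rs e
  | inr d => val d == e
  end.

Definition frac_matching (x : ridx -> R) : Prop :=
  (forall e, 0 <= x e <= 1) /\
  (forall v : gvertex, \sum_(e : ridx | gincident v e) x e <= 1).

Definition max_frac_matching (x : ridx -> R) : Prop :=
  frac_matching x /\
  forall x', frac_matching x' -> \sum_e x' e <= \sum_e x e.
End Region.

(* The service-rate LP and the fractional-matching LP of the graph
   representation have the same variables (one per recovery set) and, at each
   server, the same constraint.  The only extra constraints of the matching LP
   are [x_e <= 1] and the capacity of the dummy vertices, both of which are
   already implied by the capacity of any server in the (nonempty) recovery
   set [R_e].  Hence feasible allocations are exactly fractional matchings,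
   the total demand of an allocation is its matching size, and the optima of
   the two programs correspond. *)
From HB Require Import structures.
From mathcomp Require Import all_boot all_order all_algebra.
Import Order.TTheory GRing.Theory Num.Theory.
Set Implicit Arguments. Unset Strict Implicit.
Local Open Scope ring_scope.

Lemma big_ridx (k : nat) (t : 'I_k -> nat) (V : nmodType) (x : ridx t -> V) :
  \sum_e x e = \sum_i \sum_(j < t i) x (rpair j).
Proof.
rewrite (sig_big_dep xpredT (fun _ => xpredT) (fun i (j : 'I_(t i)) => x (rpair j))).
by apply: eq_bigr => -[i j].
Qed.

Section MatchingDemand.
Variables (k n : nat) (t : 'I_k -> nat) (Rs : ridx t -> {set 'I_n}).
Variable R : realFieldType.
Hypothesis Rs_neq0 : forall e, Rs e != set0.

Definition demand (x : ridx t -> R) (i : 'I_k) : R := \sum_(j < t i) x (rpair j).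

Lemma sum_demand (x : ridx t -> R) : \sum_i demand x i = \sum_e x e.
Proof. by rewrite big_ridx. Qed.

Lemma frac_matchingP (x : ridx t -> R) :
  frac_matching Rs x <->
  (forall e, 0 <= x e) /\ (forall l : 'I_n, \sum_(e | l \in Rs e) x e <= 1).
Proof.
split=> [[x01 cap] | [x_ge0 cap]].
  by split=> [e | l]; [case/andP: (x01 e) | exact: (cap (inl l))].
have x_le1 e : x e <= 1.
  have [l l_Re] := set0Pn _ (Rs_neq0 e).
  apply: le_trans (cap l); rewrite (bigD1 e) //= lerDl.
  by apply: sumr_ge0 => ? _; exact: x_ge0.
split=> [e | [l | d]] /=; first by rewrite x_ge0 x_le1.
  exact: cap.
by rewrite (big_pred1 (val d)).
Qed.

Lemma in_service_rate_regionP (lam : 'I_k -> R) :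
  in_service_rate_region Rs lam <->
  exists2 x, frac_matching Rs x & lam =1 demand x.
Proof.
split=> [[x [x_ge0 [lamE cap]]] | [x /frac_matchingP [x_ge0 cap] lamE]].
  by exists x => [|i]; [apply/frac_matchingP | rewrite -lamE].
by exists x; split=> //; split=> // i; rewrite lamE.
Qed.

Lemma max_frac_matching_demand (x : ridx t -> R) :
  max_frac_matching Rs x -> max_demand_vector Rs (demand x).
Proof.
case=> x_fm x_max; split; first by apply/in_service_rate_regionP; exists x.
move=> lam' /in_service_rate_regionP[x' x'_fm lam'E].
by rewrite (eq_bigr _ (fun i _ => lam'E i)) !sum_demand; exact: x_max.
Qed.

Lemma max_demand_vector_matching (lam : 'I_k -> R) :
  max_demand_vector Rs lam ->
  exists2 x, max_frac_matching Rs x & lam =1 demand x.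
Proof.
case=> /in_service_rate_regionP[x x_fm lamE] lam_max.
exists x => //; split=> // x' x'_fm.
rewrite -!sum_demand -(eq_bigr _ (fun i _ => lamE i)).
by apply: lam_max; apply/in_service_rate_regionP; exists x'.
Qed.

End MatchingDemand.

Theorem corollary1 (F : finFieldType) (k n : nat) (G : 'M[F]_(k, n))
  (t : 'I_k -> nat) (Rs : ridx t -> {set 'I_n}) (R : realFieldType) :
  (forall i, (0 < t i)%N) ->
  (forall i (j : 'I_(t i)), is_recovery_set G i (Rs (rpair j))) ->
  (forall e, #|Rs e| = 1%N \/ #|Rs e| = 2%N) ->
  (forall x : ridx t -> R, max_frac_matching Rs x ->
     max_demand_vector Rs (fun i => \sum_(j < t i) x (rpair j))) /\
  (forall lam : 'I_k -> R, max_demand_vector Rs lam ->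
     exists x : ridx t -> R, max_frac_matching Rs x /\
       forall i, lam i = \sum_(j < t i) x (rpair j)).
Proof.
move=> _ _ Rs_card.
have Rs_neq0 e : Rs e != set0 by rewrite -card_gt0; case: (Rs_card e) => ->.
split=> [x | lam]; first exact: (max_frac_matching_demand Rs_neq0).
by case/(max_demand_vector_matching Rs_neq0) => x; exists x.
Qed.
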